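(* Let $(X,*,0)$ be a solid weak BCC-algebra. Then for all $x,y\in X$ belonging to the same branch, $x*(x*(x*y))=x*y$.
   Context: A weak BCC-algebra is a set $X$ with a binary operation $*$ and a constant $0$ satisfying, for all $x,y,z\in X$: (i) $((x*y)*(z*y))*(x*z)=0$; (ii) $x*x=0$; (iii) $x*0=x$; (iv) $x*y=y*x=0$ implies $x=y$. The relation $x\leqslant y$ iff $x*y=0$ is a partial order on $X$. Let $I(X)$ be the set of minimal elements of $X$ with respect to $\leqslant$. For $a\in I(X)$ the branch initiated by $a$ is $B(a)=\{x\in X: a\leqslant x\}$; ''belonging to the same branch'' means lying in a common $B(a)$. A weak BCC-algebra is called (left) solid if $(x*y)*z=(x*z)*y$ holds for all $x,y$ belonging to the same branch and all $z\in X$. *)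

Definition le {X : Type} (op : X -> X -> X) (zero : X) (x y : X) : Prop :=
  op x y = zero.

Definition is_weak_BCC {X : Type} (op : X -> X -> X) (zero : X) : Prop :=
  (forall x y z, op (op (op x y) (op z y)) (op x z) = zero) /\
  (forall x, op x x = zero) /\
  (forall x, op x zero = x) /\
  (forall x y, op x y = zero -> op y x = zero -> x = y).

Definition minimal {X : Type} (op : X -> X -> X) (zero : X) (a : X) : Prop :=
  forall x, le op zero x a -> x = a.

Definition in_branch {X : Type} (op : X -> X -> X) (zero : X) (a x : X) : Prop :=
  le op zero a x.

Definition same_branch {X : Type} (op : X -> X -> X) (zero : X) (x y : X) : Prop :=
  exists a, minimal op zero a /\ in_branch op zero a x /\ in_branch op zero a y.

Definition is_solid {X : Type} (op : X -> X -> X) (zero : X) : Prop :=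
  forall x y z, same_branch op zero x y ->
    op (op x y) z = op (op x z) y.


(* Write [w := x * (x * y)].  Solidity turns [w * y] into [(x * y) * (x * y) = 0],
   so [w <= y], and antitonicity gives [x * y <= x * w].  Since [w] lies in the branch
   of [x], solidity also turns [(x * w) * (x * y)] into [w * w = 0], so
   [x * w <= x * y], and antisymmetry concludes. *)

Section WeakBCC.

Variables (X : Type) (op : X -> X -> X) (zero : X).

Hypothesis bcc_axiom : forall x y z, op (op (op x y) (op z y)) (op x z) = zero.
Hypothesis mulxx : forall x, op x x = zero.
Hypothesis mulx0 : forall x, op x zero = x.
Hypothesis le_anti : forall x y, le op zero x y -> le op zero y x -> x = y.

Lemma le_mulr (x y z : X) : le op zero x y -> le op zero (op x z) (op y z).
Proof.
  unfold le; intros Hxy.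
  pose proof (bcc_axiom x z y) as E; rewrite Hxy, mulx0 in E; exact E.
Qed.

Lemma le_mull (x y z : X) : le op zero x y -> le op zero (op z y) (op z x).
Proof.
  unfold le; intros Hxy.
  pose proof (bcc_axiom z y x) as E; rewrite Hxy, mulx0 in E; exact E.
Qed.

Lemma branch_zero_le_mul (a x y : X) :
  in_branch op zero a x -> in_branch op zero a y -> le op zero zero (op x y).
Proof.
  unfold in_branch; intros Hax Hay.
  pose proof (le_mulr a x y Hax) as E; unfold le in *; rewrite Hay in E; exact E.
Qed.

Lemma minimal_mul_fixed (a u : X) :
  minimal op zero a -> le op zero zero u -> op a u = a.
Proof.
  intros Ha H0u; apply Ha.
  pose proof (le_mull zero u a H0u) as E; rewrite mulx0 in E; exact E.
Qed.

Lemma in_branch_mul_mul (a x y : X) :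
  minimal op zero a -> in_branch op zero a x -> in_branch op zero a y ->
  in_branch op zero a (op x (op x y)).
Proof.
  intros Ha Hax Hay.
  pose proof (le_mulr a x (op x y) Hax) as E.
  rewrite (minimal_mul_fixed a (op x y) Ha (branch_zero_le_mul a x y Hax Hay)) in E.
  exact E.
Qed.

Hypothesis solid : is_solid op zero.

Lemma solid_mul_mul_le (x y : X) :
  same_branch op zero x y -> le op zero (op x (op x y)) y.
Proof.
  intros Hxy; unfold le; rewrite <- (solid x y (op x y) Hxy); apply mulxx.
Qed.

Lemma solid_mul_mul_mul (x y : X) :
  same_branch op zero x y -> op x (op x (op x y)) = op x y.
Proof.
  intros [a [Ha [Hax Hay]]].
  set (w := op x (op x y)).
  assert (Hxw : same_branch op zero x w).
  { exists a; split; [exact Ha | split; [exact Hax | exact (in_branch_mul_mul a x y Ha Hax Hay)]]. }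
  apply le_anti.
  - unfold le; rewrite (solid x w (op x y) Hxw); apply mulxx.
  - apply le_mull, solid_mul_mul_le; exists a; auto.
Qed.

End WeakBCC.

Theorem lemma3p5 (X : Type) (op : X -> X -> X) (zero : X)
  (HW : is_weak_BCC op zero) (HS : is_solid op zero) :
  forall x y : X, same_branch op zero x y ->
    op x (op x (op x y)) = op x y.
Proof.
  destruct HW as [bcc_axiom [mulxx [mulx0 le_anti]]].
  intros x y; apply solid_mul_mul_mul; assumption.
Qed.
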